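(* Let $n,m$ be positive integers with $2(m+1)\le n$. Then $\gamma_{gr}(C_n^m)=n-2m$.
   Context: $C_n^m$ has vertex set $[n]$, distinct vertices adjacent iff their distance in the cycle $1,2,\dots,n,1$ is at most $m$. $\gamma_{gr}$ is the Grundy domination number: the maximum length of a sequence $(v_1,\dots,v_k)$ of distinct vertices whose set is dominating and such that each $N[v_i]\setminus\bigcup_{j<i}N[v_j]$ is non-empty ($N[\cdot]$ the closed neighborhood). *)

From mathcomp Require Import all_boot all_order.
Set Implicit Arguments. Unset Strict Implicit. Unset Printing Implicit Defensive.

(* Vertices of C_n^m are 'I_n (representing 1..n as 0..n-1). *)

Definition cdist (n : nat) (i j : 'I_n) : nat :=
  let d := if i <= j then j - i else i - j in minn d (n - d).

Definition cnbh (n m : nat) (v : 'I_n) : {set 'I_n} :=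
  [set u : 'I_n | (u == v) || (cdist u v <= m)].

Definition nbh_union (n m : nat) (s : seq 'I_n) : {set 'I_n} :=
  \bigcup_(v <- s) cnbh m v.

Definition dominating_seq (n m : nat) (s : seq 'I_n) : bool :=
  nbh_union m s == [set: 'I_n].

Definition footprinting (n m : nat) (s : seq 'I_n) : bool :=
  [forall i : 'I_(size s),
     (cnbh m (tnth (in_tuple s) i) :\: nbh_union m (take i s)) != set0].

Definition grundy_dom_seq (n m : nat) (s : seq 'I_n) : bool :=
  [&& uniq s, dominating_seq m s & footprinting m s].

Definition is_grundy_dom_number (n m k : nat) : Prop :=
  (exists s : seq 'I_n, grundy_dom_seq m s /\ size s = k) /\
  (forall s : seq 'I_n, grundy_dom_seq m s -> size s <= k).

From mathcomp Require Import all_boot all_order.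
From mathcomp Require Import zify.

(* Along a footprinting sequence every vertex after the first adds a new
   vertex to the dominated set, which starts as a closed neighbourhood of
   2m + 1 vertices; so the sequence has at most n - 2m terms.  The vertices
   0, 1, ..., n - 2m - 1, in this order, reach the bound. *)

Section Footprints.

Variables n m : nat.
Implicit Types (s : seq 'I_n) (v x : 'I_n).

Lemma in_nbh_union s x : (x \in nbh_union m s) = has (fun v => x \in cnbh m v) s.
Proof.
elim: s => [|v s IHs]; first by rewrite /nbh_union big_nil inE.
by rewrite /nbh_union big_cons inE -/(nbh_union m s) IHs.
Qed.

Lemma nbh_union_rcons s v : nbh_union m (rcons s v) = nbh_union m s :|: cnbh m v.
Proof. by rewrite /nbh_union big_rcons. Qed.

Lemma footprintingE x0 s :
  footprinting m s =
  all (fun i => cnbh m (nth x0 s i) :\: nbh_union m (take i s) != set0)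
      (iota 0 (size s)).
Proof.
apply/forallP/allP => [fp i | fp i].
- by rewrite mem_iota => /andP[_ lt_is]; have := fp (Ordinal lt_is); rewrite (tnth_nth x0).
- by rewrite (tnth_nth x0) fp // mem_iota ltn_ord.
Qed.

Lemma footprinting_rcons s v :
  footprinting m (rcons s v) =
  footprinting m s && (cnbh m v :\: nbh_union m s != set0).
Proof.
rewrite !(footprintingE v) size_rcons -addn1 iotaD all_cat /= andbT.
rewrite nth_rcons ltnn eqxx -cats1 take_size_cat //; congr (_ && _).
apply/eq_in_all => i; rewrite mem_iota /= => lt_is.
by rewrite nth_cat lt_is takel_cat // ltnW.
Qed.

Lemma card_nbh_union_footprinting v s : footprinting m (v :: s) ->
  #|cnbh m v| + size s <= #|nbh_union m (v :: s)|.
Proof.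
elim/last_ind: s => [|s x IHs].
  by rewrite addn0 /nbh_union big_cons big_nil setU0.
rewrite -rcons_cons footprinting_rcons size_rcons addnS => /andP[fp new].
apply: leq_ltn_trans (IHs fp) _; rewrite nbh_union_rcons.
by apply/proper_card/properUl; rewrite -setD_eq0.
Qed.

End Footprints.

Section CyclePower.

Variables n m : nat.

(* [a - b + (b - a)] is the distance [|a - b|] in truncated subtraction. *)
Lemma in_cnbh_inord (a b : nat) : a < n.+1 -> b < n.+1 ->
  (inord a \in cnbh m (inord b : 'I_n.+1)) =
  (a == b) || (minn (a - b + (b - a)) (n.+1 - (a - b + (b - a))) <= m).
Proof.
move=> lt_an lt_bn; rewrite inE /cdist -val_eqE /= !inordK //.
suff -> : (if a <= b then b - a else a - b) = a - b + (b - a) by [].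
by case: leqP; lia.
Qed.

Lemma card_cnbh (v : 'I_n.+1) : 2 * m < n.+1 -> 2 * m < #|cnbh m v|.
Proof.
move=> m_small.
(* [w k] is [v + k - m] mod [n + 1]; for [k <= 2m] these are distinct. *)
pose w (k : nat) :=
  if v + k < m then v + k + n.+1 - m
  else if v + k - m <= n then v + k - m else v + k - m - n.+1.
have lt_v := ltn_ord v.
have lt_w (k : 'I_(2 * m).+1) : w k < n.+1.
  by have := ltn_ord k; rewrite /w /=; repeat case: ifP => ?; lia.
pose f (k : 'I_(2 * m).+1) : 'I_n.+1 := inord (w k).
have inj_f : injective f.
  move=> k1 k2 /(congr1 (@nat_of_ord _)); rewrite /f /= !inordK // => eq_w.
  apply/val_inj; move: eq_w; have := ltn_ord k1; have := ltn_ord k2.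
  by rewrite /w /=; repeat case: ifP => ?; lia.
suff: #|f @: 'I_(2 * m).+1| <= #|cnbh m v| by rewrite card_imset // card_ord.
apply/subset_leq_card/subsetP => _ /imsetP[k _ ->].
rewrite -[v]inord_val in_cnbh_inord //=.
by have := ltn_ord k; have := lt_w k; rewrite /w /=; repeat case: ifP => ?; lia.
Qed.

Lemma footprinting_size_le (s : seq 'I_n.+1) : 2 * m < n.+1 -> footprinting m s ->
  size s <= n.+1 - 2 * m.
Proof.
case: s => [//|v s] m_small /card_nbh_union_footprinting card_s.
have := leq_trans card_s (max_card _); have := card_cnbh v m_small.
rewrite card_ord /=; lia.
Qed.

Definition initial_vertices (k : nat) : seq 'I_n.+1 := [seq inord i | i <- iota 0 k].

Lemma initial_verticesS k :
  initial_vertices k.+1 = rcons (initial_vertices k) (inord k).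
Proof. by rewrite /initial_vertices -(addn1 k) iotaD map_cat cats1. Qed.

Lemma size_initial_vertices k : size (initial_vertices k) = k.
Proof. by rewrite size_map size_iota. Qed.

Lemma uniq_initial_vertices k : k <= n.+1 -> uniq (initial_vertices k).
Proof.
move=> le_kn; rewrite map_inj_in_uniq ?iota_uniq // => a b.
by rewrite !mem_iota => lt_a lt_b /(congr1 (@nat_of_ord _)); rewrite /= !inordK; lia.
Qed.

(* Vertex 0 dominates the wrap-around arc; any other u is dominated by u - m. *)
Lemma dominating_initial_vertices : 2 * m < n.+1 ->
  dominating_seq m (initial_vertices (n.+1 - 2 * m)).
Proof.
move=> m_small; apply/eqP/setP => u; rewrite inE in_nbh_union has_map; apply/hasP.
have lt_u := ltn_ord u; rewrite -[u]inord_val.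
have [near0 | far0] := boolP ((u <= m) || (n.+1 - m <= u)).
- exists 0; first by rewrite mem_iota; lia.
  by rewrite /= in_cnbh_inord //; lia.
- exists (u - m); first by rewrite mem_iota; lia.
  by rewrite /= in_cnbh_inord //; lia.
Qed.

(* Vertex 0 is its own footprint; for i > 0 the footprint of i is i + m. *)
Lemma footprinting_initial_vertices k : k <= n.+1 - 2 * m ->
  footprinting m (initial_vertices k).
Proof.
elim: k => [|k IHk] le_k; first by apply/forallP => -[].
rewrite initial_verticesS footprinting_rcons IHk ?andTb; last exact: ltnW.
apply/set0Pn.
case: (posnP k) => [-> | k_gt0].
  by exists (inord 0); rewrite inE /nbh_union big_nil inE inE eqxx.
exists (inord (k + m)); rewrite in_setD in_nbh_union has_map; apply/andP; split.
- apply/hasPn => j; rewrite mem_iota => /andP[_ lt_jk] /=.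
  by rewrite in_cnbh_inord; lia.
- by rewrite in_cnbh_inord; lia.
Qed.

Lemma grundy_dom_seq_initial_vertices : 2 * m < n.+1 ->
  grundy_dom_seq m (initial_vertices (n.+1 - 2 * m)).
Proof.
move=> m_small; apply/and3P; split.
- exact/uniq_initial_vertices/leq_subr.
- exact: dominating_initial_vertices.
- exact: footprinting_initial_vertices.
Qed.

End CyclePower.

Theorem corollary1 (n m : nat) :
  0 < n -> 0 < m -> 2 * (m + 1) <= n ->
  is_grundy_dom_number n m (n - 2 * m).
Proof.
case: n => [//|n] _ _ le_mn; have m_small : 2 * m < n.+1 by lia.
split.
- exists (initial_vertices n (n.+1 - 2 * m)).
  by rewrite size_initial_vertices grundy_dom_seq_initial_vertices.
- by move=> s /and3P[_ _ fp_s]; apply: footprinting_size_le.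
Qed.
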